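(* Let $T_1\subseteq T_2\subseteq\cdots$ be well ordered sets, each $T_n$ carrying the restriction of the order of $T_{n+1}$, all having the same minimum and the same maximum. Let $T=\bigcup_n T_n$ with the induced linear order and let $\bar T$ be its completion. Define $d:\bar T\times\bar T\to[0,+\infty)$ by $d(x,x)=0$, $d(x,y)=d(y,x)=\dfrac{1}{\min\{n: \,]x,y]\cap T_n\neq\emptyset\}}$ for $x<y$. Then $d$ is a well-defined metric on $\bar T$; it is a Reznichenko metric, i.e. for any distinct $x,y\in\bar T$ there are neighborhoods $U\ni x$, $V\ni y$ with $\inf\{d(u,v):u\in U,v\in V\}>0$; and $d$ fragments $\bar T$ (with the order topology).
   Context: The completion of a linearly ordered set $T$ is the unique linearly ordered set $\bar T\supseteq T$ (extending the order of $T$) such that $\bar T$ is compact in its order topology and $]x,y]\cap T\neq\emptyset$ for all $x<y$ in $\bar T$, where $]x,y]=\{z:x<z\le y\}$. A map $d$ fragments a topological space $K$ if for every nonempty closed $L\subseteq K$ and every $\varepsilon>0$ there is a nonempty relatively open $U\subseteq L$ with $\sup\{d(x,y):x,y\in U\}<\varepsilon$. *)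

From Stdlib Require Import Reals List.
Open Scope R_scope.

Section Defs.
Variable X : Type.
Variable lt : X -> X -> Prop.

Definition le (x y : X) : Prop := lt x y \/ x = y.

Definition strict_linear_order : Prop :=
  (forall x, ~ lt x x) /\
  (forall x y z, lt x y -> lt y z -> lt x z) /\
  (forall x y, lt x y \/ x = y \/ lt y x).

Definition well_ordered_subset (S : X -> Prop) : Prop :=
  forall A : X -> Prop, (forall z, A z -> S z) -> (exists z, A z) ->
    exists m, A m /\ forall z, A z -> le m z.

(* basic open sets of the order topology: intervals with optional endpoints
   (None = unbounded): (a,b), (a,->), (<-,b), and the whole space *)
Definition ointerval (oa ob : option X) (z : X) : Prop :=
  match oa with None => True | Some a => lt a z end /\
  match ob with None => True | Some b => lt z b end.

Definition order_open (U : X -> Prop) : Prop :=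
  forall x, U x -> exists oa ob, ointerval oa ob x /\
    forall z, ointerval oa ob z -> U z.

Definition order_closed (L : X -> Prop) : Prop :=
  order_open (fun x => ~ L x).

Definition order_compact : Prop :=
  forall (I : Type) (U : I -> X -> Prop),
    (forall i, order_open (U i)) ->
    (forall x, exists i, U i x) ->
    exists l : list I, forall x, exists i, In i l /\ U i x.

Definition rel_open (L U : X -> Prop) : Prop :=
  exists O, order_open O /\ forall x, U x <-> (L x /\ O x).

Definition hits (S : X -> Prop) (x y : X) : Prop :=
  exists z, S z /\ lt x z /\ le z y.

Definition is_metric (d : X -> X -> R) : Prop :=
  (forall x y, 0 <= d x y) /\
  (forall x y, d x y = 0 <-> x = y) /\
  (forall x y, d x y = d y x) /\
  (forall x y z, d x z <= d x y + d y z).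

Definition reznichenko (d : X -> X -> R) : Prop :=
  forall x y, x <> y ->
    exists U V, order_open U /\ order_open V /\ U x /\ V y /\
      exists eps, 0 < eps /\ forall u v, U u -> V v -> eps <= d u v.

(* sup of d over U x U is < eps  <=>  bounded by some eps' < eps *)
Definition fragments (d : X -> X -> R) : Prop :=
  forall L : X -> Prop, order_closed L -> (exists x, L x) ->
  forall eps, 0 < eps ->
    exists U, rel_open L U /\ (exists x, U x) /\
      exists eps', eps' < eps /\ forall x y, U x -> U y -> d x y <= eps'.
End Defs.

Arguments le {X}.
Arguments strict_linear_order {X}.
Arguments well_ordered_subset {X}.
Arguments order_open {X}.
Arguments order_closed {X}.
Arguments order_compact {X}.
Arguments rel_open {X}.
Arguments hits {X}.
Arguments is_metric {X}.
Arguments reznichenko {X}.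
Arguments fragments {X}.

Definition least_hit {X : Type} (lt : X -> X -> Prop) (T : nat -> X -> Prop)
  (x y : X) (n : nat) : Prop :=
  (1 <= n)%nat /\ hits lt (T n) x y /\
  forall m, (1 <= m)%nat -> hits lt (T m) x y -> (n <= m)%nat.

Definition d_spec {X : Type} (lt : X -> X -> Prop) (T : nat -> X -> Prop)
  (d : X -> X -> R) : Prop :=
  (forall x, d x x = 0) /\
  (forall x y, lt x y -> exists n, least_hit lt T x y n /\
     d x y = / INR n /\ d y x = / INR n).

From Stdlib Require Import Reals List Lra Lia Arith Wf_nat Classical ClassicalEpsilon.
Open Scope R_scope.

(* The argument rests on one observation about d: for x < y, d x y = 1/n where
   n is the least level whose points reach into ]x,y].  Hence
   - a point of T_k in ]u,v] forces d u v >= 1/k   (lower bound), and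
   - no point of T_N in ]u,v] forces d u v <= 1/(N+1)   (upper bound).
   From the lower bound, d shrinks when ]u,v] shrinks, which yields the strong
   triangle inequality d x z <= max (d x y) (d y z): d is an ultrametric.
   Reznichenko's condition: two distinct points are separated by a point z of
   some T_k, and the neighbourhoods ]<-,z[ and "beyond z" stay 1/k apart.
   Fragmentability: given 1/(N+1) < eps and a nonempty L, the well order of
   T_N provides the least point a of T_N above some point of L; on ]<-,a[ no
   two points of L enclose a point of T_N, so d is at most 1/(N+1) there.
   The file first collects order-theoretic facts, then constructs d, then
   proves the three properties, and finally assembles the theorem. *)

Lemma least_nat (P : nat -> Prop) :
  (exists n, P n) -> exists n, P n /\ forall m, P m -> (n <= m)%nat.
Proof.
  intros HP.
  destruct (dec_inh_nat_subset_has_unique_least_element P (fun n => classic (P n)) HP)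
    as [n [Hn _]].
  exists n; exact Hn.
Qed.

Lemma ointerval_open {X : Type} (lt : X -> X -> Prop) oa ob :
  order_open lt (ointerval X lt oa ob).
Proof. intros x Hx; exists oa, ob; split; auto. Qed.

Lemma small_level (eps : R) : 0 < eps ->
  exists N, (1 <= N)%nat /\ / INR (S N) < eps.
Proof.
  intros Heps.
  destruct (INR_archimed eps 1 Heps) as [n0 Hn0].
  exists (S n0); split; [lia|].
  assert (INR n0 <= INR (S (S n0))) by (apply le_INR; lia).
  assert (Hpos : 0 < INR (S (S n0))) by (apply lt_0_INR; lia).
  apply Rmult_lt_reg_l with (INR (S (S n0))); [exact Hpos|].
  rewrite Rinv_r; nra.
Qed.

Section LinearOrder.

Variable X : Type.
Variable lt : X -> X -> Prop.
Hypothesis Hlin : strict_linear_order lt.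

Lemma lt_irrefl x : ~ lt x x.
Proof. apply Hlin. Qed.

Lemma lt_trans x y z : lt x y -> lt y z -> lt x z.
Proof. apply Hlin. Qed.

Lemma lt_trichotomy x y : lt x y \/ x = y \/ lt y x.
Proof. apply Hlin. Qed.

Lemma lt_asym x y : lt x y -> ~ lt y x.
Proof. intros h1 h2; exact (lt_irrefl x (lt_trans _ _ _ h1 h2)). Qed.

Lemma lt_le_trans x y z : lt x y -> le lt y z -> lt x z.
Proof. intros h [h'|h']; [eapply lt_trans; eauto|subst; auto]. Qed.

Lemma le_lt_trans x y z : le lt x y -> lt y z -> lt x z.
Proof. intros [h|h] h'; [eapply lt_trans; eauto|subst; auto]. Qed.

Lemma le_trans x y z : le lt x y -> le lt y z -> le lt x z.
Proof. intros [h|h] h'; [left; eapply lt_le_trans; eauto|subst; auto]. Qed.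

Lemma not_lt_le x y : ~ lt y x -> le lt x y.
Proof.
  intros h; destruct (lt_trichotomy x y) as [h'|[h'|h']];
    [left|right|contradiction]; auto.
Qed.

Variable T : nat -> X -> Prop.

Section Construction.

Hypothesis Hdense : forall x y, lt x y ->
  hits lt (fun z => exists n, (1 <= n)%nat /\ T n z) x y.

Lemma least_hit_exists x y : lt x y -> exists n, least_hit lt T x y n.
Proof.
  intros hxy.
  destruct (Hdense x y hxy) as [z [[k [hk Tz]] [xz zy]]].
  destruct (least_nat (fun n => (1 <= n)%nat /\ hits lt (T n) x y))
    as [n [[hn1 hn2] hmin]].
  - exists k; split; [exact hk|exists z; auto].
  - exists n; split; [exact hn1|split; [exact hn2|auto]].
Qed.

Definition hit_level (x y : X) : nat :=
  epsilon (inhabits 0%nat) (least_hit lt T x y).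

Definition hit_metric (x y : X) : R :=
  if excluded_middle_informative (lt x y) then / INR (hit_level x y)
  else if excluded_middle_informative (lt y x) then / INR (hit_level y x)
  else 0.

Lemma hit_metric_spec : d_spec lt T hit_metric.
Proof.
  split.
  - intros x; unfold hit_metric.
    destruct (excluded_middle_informative (lt x x)) as [h|h];
      [destruct (lt_irrefl x h)|reflexivity].
  - intros x y hxy; exists (hit_level x y); split.
    + exact (epsilon_spec _ _ (least_hit_exists x y hxy)).
    + unfold hit_metric.
      destruct (excluded_middle_informative (lt x y)) as [_|h]; [|contradiction].
      destruct (excluded_middle_informative (lt y x)) as [h|_];
        [destruct (lt_asym _ _ hxy h)|split; reflexivity].
Qed.

End Construction.

Section Properties.

Variable d : X -> X -> R.
Hypothesis Hd : d_spec lt T d.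

Lemma d_diag x : d x x = 0.
Proof. apply Hd. Qed.

Lemma d_sym x y : d x y = d y x.
Proof.
  destruct (lt_trichotomy x y) as [h|[h|h]].
  - destruct (proj2 Hd x y h) as [n [_ [e1 e2]]]; lra.
  - subst; reflexivity.
  - destruct (proj2 Hd y x h) as [n [_ [e1 e2]]]; lra.
Qed.

Lemma d_lower u v k : lt u v -> (1 <= k)%nat -> hits lt (T k) u v ->
  / INR k <= d u v.
Proof.
  intros huv hk hhit.
  destruct (proj2 Hd u v huv) as [n [[hn [_ hmin]] [e _]]]; rewrite e.
  apply Rinv_le_contravar; [apply lt_0_INR; lia|apply le_INR; auto].
Qed.

Lemma d_lower_at u v k z : (1 <= k)%nat -> T k z -> lt u z -> le lt z v ->
  / INR k <= d u v.
Proof.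
  intros hk Tz uz zv.
  apply d_lower; [eapply lt_le_trans; eauto|exact hk|exists z; auto].
Qed.

Lemma d_pos x y : lt x y -> 0 < d x y.
Proof.
  intros h; destruct (proj2 Hd x y h) as [n [[hn _] [e _]]]; rewrite e.
  apply Rinv_0_lt_compat, lt_0_INR; lia.
Qed.

Lemma d_nonneg x y : 0 <= d x y.
Proof.
  destruct (lt_trichotomy x y) as [h|[h|h]].
  - left; apply d_pos, h.
  - subst; rewrite d_diag; lra.
  - rewrite d_sym; left; apply d_pos, h.
Qed.

Lemma d_mono a b a' b' : lt a' b' -> le lt a a' -> le lt b' b -> d a' b' <= d a b.
Proof.
  intros h ha hb.
  destruct (proj2 Hd a' b' h) as [n [[hn [[z [Tz [a'z zb']]] _]] [e _]]]; rewrite e.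
  apply (d_lower_at _ _ _ z); auto.
  - eapply le_lt_trans; eauto.
  - eapply le_trans; eauto.
Qed.

(* Splitting ]a,c] at b: the witness of d a c lies in ]a,b] or in ]b,c]. *)
Lemma d_split a b c : lt a b -> lt b c -> d a c <= d a b \/ d a c <= d b c.
Proof.
  intros hab hbc.
  destruct (proj2 Hd a c (lt_trans _ _ _ hab hbc))
    as [n [[hn [[z [Tz [az zc]]] _]] [e _]]]; rewrite e.
  destruct (lt_trichotomy b z) as [h|h].
  - right; apply (d_lower_at _ _ _ z); auto.
  - left; apply (d_lower_at _ _ _ z); auto.
    destruct h as [h|h]; [right; auto|left; auto].
Qed.

Lemma d_ultra_lt x y z : lt x z -> d x z <= Rmax (d x y) (d y z).
Proof.
  intros hxz.
  assert (Hmax1 := Rmax_l (d x y) (d y z)).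
  assert (Hmax2 := Rmax_r (d x y) (d y z)).
  destruct (lt_trichotomy y x) as [h|[h|h]].
  - assert (d x z <= d y z) by (apply d_mono; auto; [left|right]; auto); lra.
  - subst; lra.
  - destruct (lt_trichotomy y z) as [h'|[h'|h']].
    + destruct (d_split x y z h h'); lra.
    + subst; lra.
    + assert (d x z <= d x y) by (apply d_mono; auto; [right|left]; auto); lra.
Qed.

Lemma d_ultra x y z : d x z <= Rmax (d x y) (d y z).
Proof.
  destruct (lt_trichotomy x z) as [h|[h|h]].
  - apply d_ultra_lt, h.
  - subst; rewrite d_diag; apply Rle_trans with (d z y);
      [apply d_nonneg|apply Rmax_l].
  - rewrite (d_sym x z), (d_sym x y), (d_sym y z), Rmax_comm.
    apply d_ultra_lt, h.
Qed.

Lemma d_is_metric : is_metric d.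
Proof.
  split; [exact d_nonneg|split; [|split; [exact d_sym|]]].
  - intros x y; split; [|intros; subst; apply d_diag].
    intros e; destruct (lt_trichotomy x y) as [h|[h|h]]; auto.
    + pose proof (d_pos x y h); lra.
    + rewrite d_sym in e; pose proof (d_pos y x h); lra.
  - intros x y z.
    pose proof (d_ultra x y z); pose proof (d_nonneg x y); pose proof (d_nonneg y z).
    unfold Rmax in *; destruct (Rle_dec (d x y) (d y z)); lra.
Qed.

Hypothesis Hdense : forall x y, lt x y ->
  hits lt (fun z => exists n, (1 <= n)%nat /\ T n z) x y.

Lemma d_separates_lt x y : lt x y ->
  exists U V, order_open lt U /\ order_open lt V /\ U x /\ V y /\
    exists eps, 0 < eps /\ forall u v, U u -> V v -> eps <= d u v.
Proof.
  intros hxy.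
  assert (Hk : forall k, (1 <= k)%nat -> 0 < / INR k)
    by (intros k hk; apply Rinv_0_lt_compat, lt_0_INR; lia).
  destruct (classic (exists w, lt x w /\ lt w y)) as [[w [xw wy]]|Hgap].
  - (* a level-k point z in ]x,w] splits the line into ]<-,z[ and ]z,->[ *)
    destruct (Hdense x w xw) as [z [[k [hk Tz]] [xz zw]]].
    exists (ointerval X lt None (Some z)), (ointerval X lt (Some z) None).
    split; [apply ointerval_open|split; [apply ointerval_open|]].
    split; [split; auto|split; [split; [eapply le_lt_trans; eauto|exact I]|]].
    exists (/ INR k); split; [auto|].
    intros u v [_ uz] [zv _]; apply (d_lower_at _ _ _ z); auto; left; auto.
  - (* x and y are neighbours: ]<-,y[ = ]<-,x] and ]x,->[ = [y,->[ *)
    destruct (Hdense x y hxy) as [z [[k [hk Tz]] [xz zy]]].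
    exists (ointerval X lt None (Some y)), (ointerval X lt (Some x) None).
    split; [apply ointerval_open|split; [apply ointerval_open|]].
    split; [split; auto|split; [split; auto|]].
    exists (/ INR k); split; [auto|].
    intros u v [_ uy] [xv _].
    assert (hux : le lt u x) by (apply not_lt_le; intros h; apply Hgap; eauto).
    assert (hyv : le lt y v) by (apply not_lt_le; intros h; apply Hgap; eauto).
    apply (d_lower_at _ _ _ z); auto; [eapply le_lt_trans|eapply le_trans]; eauto.
Qed.

Lemma d_reznichenko : reznichenko lt d.
Proof.
  intros x y hxy; destruct (lt_trichotomy x y) as [h|[h|h]];
    [apply d_separates_lt, h|contradiction|].
  destruct (d_separates_lt y x h) as [U [V [oU [oV [Uy [Vx [eps [he hb]]]]]]]].
  exists V, U; do 4 (split; auto); exists eps; split; auto.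
  intros u v Vu Uv; rewrite d_sym; auto.
Qed.

Hypothesis Hmono : forall n, (1 <= n)%nat -> forall z, T n z -> T (S n) z.

Lemma T_incr k j : (1 <= k)%nat -> (k <= j)%nat -> forall z, T k z -> T j z.
Proof.
  intros hk hkj; induction hkj; auto.
  intros z Tz; apply Hmono; [lia|auto].
Qed.

Lemma d_upper x y N : lt x y ->
  (forall t, T N t -> lt x t -> le lt t y -> False) -> d x y <= / INR (S N).
Proof.
  intros hxy hno.
  destruct (proj2 Hd x y hxy) as [n [[hn [[z [Tz [xz zy]]] _]] [e _]]]; rewrite e.
  destruct (le_lt_dec n N) as [hle|hlt].
  - destruct (hno z (T_incr n N hn hle z Tz) xz zy).
  - apply Rinv_le_contravar; [apply lt_0_INR; lia|apply le_INR; lia].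
Qed.

Hypothesis Hwo : forall n, (1 <= n)%nat -> well_ordered_subset lt (T n).

Lemma level_gap (L : X -> Prop) N : (1 <= N)%nat -> (exists l, L l) ->
  exists O, order_open lt O /\ (exists x, L x /\ O x) /\
    forall x y t, L x -> O x -> L y -> O y -> T N t -> lt x t -> le lt t y -> False.
Proof.
  intros hN [l0 Ll0].
  destruct (classic (exists t, T N t /\ exists l, L l /\ lt l t)) as [H|H].
  - (* a = least point of level N above some point of L; take O = ]<-,a[ *)
    destruct (Hwo N hN (fun t => T N t /\ exists l, L l /\ lt l t)
                (fun z h => proj1 h) H) as [a [[Ta [l [Ll la]]] amin]].
    exists (ointerval X lt None (Some a)); split; [apply ointerval_open|split].
    + exists l; split; [exact Ll|split; [exact I|exact la]].
    + intros x y t Lx _ Ly [_ ya] Tt xt ty.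
      assert (hat : le lt a t) by (apply amin; split; eauto).
      exact (lt_irrefl a (le_lt_trans _ _ _ (le_trans _ _ _ hat ty) ya)).
  - exists (ointerval X lt None None); split; [apply ointerval_open|split].
    + exists l0; split; [exact Ll0|split; exact I].
    + intros x y t Lx _ _ _ Tt xt _; apply H; eauto.
Qed.

Lemma d_fragments : fragments lt d.
Proof.
  intros L _ HL eps Heps.
  destruct (small_level eps Heps) as [N [hN hNe]].
  destruct (level_gap L N hN HL) as [O [oO [[x0 [Lx0 Ox0]] Hno]]].
  exists (fun x => L x /\ O x); split; [exists O; split; [exact oO|tauto]|].
  split; [exists x0; auto|].
  exists (/ INR (S N)); split; [exact hNe|].
  intros x y [Lx Ox] [Ly Oy]; destruct (lt_trichotomy x y) as [h|[h|h]].
  - apply d_upper; [exact h|intros t; eapply Hno; eauto].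
  - subst; rewrite d_diag; left; apply Rinv_0_lt_compat, lt_0_INR; lia.
  - rewrite d_sym; apply d_upper; [exact h|intros t; eapply Hno; eauto].
Qed.

End Properties.

End LinearOrder.

Theorem mainTheorem10 (Tb : Type) (lt : Tb -> Tb -> Prop) (T : nat -> Tb -> Prop)
  (Hlin : strict_linear_order lt)
  (Hwo : forall n, (1 <= n)%nat -> well_ordered_subset lt (T n))
  (Hmono : forall n, (1 <= n)%nat -> forall z, T n z -> T (S n) z)
  (Hminmax : exists m M, forall n, (1 <= n)%nat ->
      T n m /\ T n M /\ forall z, T n z -> le lt m z /\ le lt z M)
  (Hcompact : order_compact lt)
  (Hdense : forall x y, lt x y ->
      hits lt (fun z => exists n, (1 <= n)%nat /\ T n z) x y) :
  (exists d, d_spec lt T d) /\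
  (forall d, d_spec lt T d ->
     is_metric d /\ reznichenko lt d /\ fragments lt d).
Proof.
  split.
  - exists (hit_metric Tb lt T); exact (hit_metric_spec Tb lt Hlin T Hdense).
  - intros d Hd; split; [|split].
    + exact (d_is_metric Tb lt Hlin T d Hd).
    + exact (d_reznichenko Tb lt Hlin T d Hd Hdense).
    + exact (d_fragments Tb lt Hlin T d Hd Hmono Hwo).
Qed.
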